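(* Let $G$ be a connected graph with adjacency matrix $A$ and positive degrees, and let $e=(i,j)$, $i\ne j$, $a_{ij}>0$, be an edge. (a) If $e$ is not a cut-edge, then $\lim_{r\to 0^+}c_r(e)=c(e)$, where $c(e)=K(D^{-1}\widehat A)-K(D^{-1}A)$. (b) If $e$ is a cut-edge, then $\lim_{r\to 0^+} r\,c_r(e)=1$ and the limit $\lim_{r\to 0^+}\big(r^{-1}-c_r(e)\big)$ exists and is finite. Consequently, for the filtered score $\tilde c_r(e)$, the limit $\lim_{r\to 0^+}\tilde c_r(e)$ is finite in all cases and equals $c(e)$ when $e$ is not a cut-edge.
   Context: Graphs are undirected and possibly weighted on vertex set $\{1,\dots,n\}$, with symmetric nonnegative adjacency matrix $A=(a_{k\ell})$; $d=A\mathbf 1$, $D=\mathrm{diag}(d)$, $\|d\|_1=\sum_kd_k$, $D^{\pm1/2}=\mathrm{diag}(d_k^{\pm1/2})$; $e_k$ is the $k$-th column of the identity and $\mathbf 1$ the all-ones vector. For an irreducible row-stochastic matrix $Q$, $K(Q)=\sum_{\ell=2}^n 1/(1-\lambda_\ell)$ where $1=\lambda_1,\dots,\lambda_n$ are its eigenvalues (the Kemeny constant, i.e. the expected first passage time to a state drawn from the stationary distribution). With $v=e_i-e_j$ and $\widehat A=A+a_{ij}vv^T$ (deleting edge $e$ and adding loops of weight $a_{ij}$ at $i$ and $j$; $\widehat A\mathbf 1=d$). The edge $e$ is a cut-edge if deleting it disconnects $G$. For $r>0$ and symmetric nonnegative $B$ with $B\mathbf 1=d$, $K_r(B)=\operatorname{Tr}\Big(\big((1+r)I-D^{-1/2}BD^{-1/2}+\tfrac{1}{\|d\|_1}D^{1/2}\mathbf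 1\mathbf 1^TD^{1/2}\big)^{-1}\Big)-(1+r)^{-1}$; the regularized score is $c_r(e)=K_r(\widehat A)-K_r(A)$, and the filtered score is $\tilde c_r(e)=r^{-1}-c_r(e)$ if $e$ is a cut-edge and $\tilde c_r(e)=c_r(e)$ otherwise. *)

From HB Require Import structures.
From mathcomp Require Import all_boot all_order all_algebra.
From mathcomp Require Import all_classical all_reals all_analysis.
From mathcomp Require Import complex.
Set Implicit Arguments. Unset Strict Implicit. Unset Printing Implicit Defensive.
Import Order.TTheory GRing.Theory Num.Theory.
Local Open Scope ring_scope.
Local Open Scope complex_scope.

Section Defs.
Variable R : realType.
Variable n : nat.
Implicit Types (A B Q : 'M[R]_n).

Definition deg A (k : 'I_n) : R := \sum_(l < n) A k l.
Definition vol A : R := \sum_(k < n) deg A k.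
Definition Dmat A : 'M[R]_n := diag_mx (\row_k deg A k).
Definition Dsqrt A : 'M[R]_n := diag_mx (\row_k Num.sqrt (deg A k)).
Definition Dinvsqrt A : 'M[R]_n := diag_mx (\row_k (Num.sqrt (deg A k))^-1).
Definition ones : 'cV[R]_n := const_mx 1.

Definition evec (i j : 'I_n) : 'cV[R]_n := delta_mx i 0 - delta_mx j 0.
Definition Ahat A (i j : 'I_n) : 'M[R]_n := A + A i j *: (evec i j *m (evec i j)^T).

(* the graph with edge {k,l} iff a_kl > 0 (loops irrelevant for connectivity) *)
Definition adjrel A : rel 'I_n := fun k l => 0 < A k l.
Definition connectedG A : Prop := forall k l : 'I_n, connect (adjrel A) k l.
Definition delete_edge A (i j : 'I_n) : 'M[R]_n :=
  \matrix_(k, l) (if ((k == i) && (l == j)) || ((k == j) && (l == i)) then 0 else A k l).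
Definition cut_edge A (i j : 'I_n) : Prop := ~ connectedG (delete_edge A i j).

(* eigenvalues (with algebraic multiplicity, in C = R[i]) of a real matrix *)
Definition eigs Q : seq R[i] :=
  sval (closed_field_poly_normal (char_poly (map_mx (fun x : R => x%:C) Q))).
(* Kemeny constant: sum over the eigenvalues other than (one copy of) lambda_1 = 1
   of 1/(1 - lambda); the sum is real (non-real eigenvalues come in conjugate
   pairs), we take its real part. *)
Definition Kemeny Q : R := complex.Re (\sum_(z <- rem 1 (eigs Q)) (1 - z)^-1).

Definition Kreg A (r : R) B : R :=
  \tr (invmx ((1 + r)%:M - Dinvsqrt A *m B *m Dinvsqrt A
               + (vol A)^-1 *: (Dsqrt A *m ones *m ones^T *m Dsqrt A)))
  - (1 + r)^-1.

Definition c_reg A (i j : 'I_n) (r : R) : R := Kreg A r (Ahat A i j) - Kreg A r A.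
Definition c_score A (i j : 'I_n) : R :=
  Kemeny (invmx (Dmat A) *m Ahat A i j) - Kemeny (invmx (Dmat A) *m A).

Definition c_filtered A (i j : 'I_n) (r : R) : R :=
  if `[< cut_edge A i j >] then r^-1 - c_reg A i j r else c_reg A i j r.
End Defs.

From HB Require Import structures.
From mathcomp Require Import all_boot all_order all_algebra.
From mathcomp Require Import all_classical all_reals all_analysis.
From mathcomp Require Import complex.
From mathcomp.algebra_tactics Require Import ring lra.
Import Order.TTheory GRing.Theory Num.Theory numFieldNormedType.Exports.

(** Let [w = D^(1/2) 1] and, for [B] symmetric with row sums [d], let
  [N = D^(-1/2) B D^(-1/2)], a symmetric matrix with [N w = w].  The rank-one
  term in [K_r] only shifts the eigenvalue of [w] by [1]; a Sherman-Morrison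
  computation gives [K_r(B) = sum_k 1/(1 + r - lambda_k) - 1/r] over the
  eigenvalues of [N], which are those of [D^-1 B].  Each eigenvalue [1]
  contributes [1/r], so [K_r(B) = (m - 1)/r + F_B(r)] where [m] is the
  multiplicity of [1] and [F_B(r) -> K(D^-1 B)].  Since [1 - N] is congruent
  to the Laplacian [D - B], [m] is the number of connected components of the
  graph of [B]: [1] for [A], and for [Ahat] (which is [A] without the edge plus
  loops) [1] if [e] is not a cut-edge and [2] if it is. *)

Set Implicit Arguments. Unset Strict Implicit. Unset Printing Implicit Defensive.
Local Open Scope ring_scope.
Local Open Scope classical_set_scope.

Lemma mxrank_diag (F : fieldType) n (v : 'rV[F]_n) :
  \rank (diag_mx v) = (\sum_(k < n) ((v 0 k != 0)%R : nat))%N.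
Proof.
elim: n v => [|n IH] v; first by rewrite big_ord0 flatmx0 mxrank0.
have := diag_mx_row (lsubmx (v : 'rV_(1 + n))) (rsubmx (v : 'rV_(1 + n))).
rewrite hsubmxK => E.
change (\rank (diag_mx (v : 'rV_(1 + n))) = (\sum_(k < n.+1) ((v 0 k != 0)%R : nat))%N).
rewrite E rank_diag_block_mx IH big_ord_recl; congr (_ + _)%N.
  have -> : diag_mx (lsubmx (v : 'rV_(1 + n))) = (v 0 0)%:M.
    by apply/matrixP=> k l; rewrite !ord1 !mxE /= mulr1n; congr (v _ _); apply: val_inj.
  have [->|v0] := eqVneq (v 0 0) 0; first by rewrite raddf0 mxrank0.
  by rewrite mxrank_unit // unitmxE det_scalar1 unitfE.
by apply: eq_bigr => k _; rewrite !mxE; congr (nat_of_bool (v _ _ != 0)); apply: val_inj.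
Qed.

Lemma char_poly_conj (F : comUnitRingType) n (P X : 'M[F]_n) :
  P \in unitmx -> char_poly (invmx P *m X *m P) = char_poly X.
Proof.
move=> Pu; pose Pp := map_mx (@polyC F) P; pose Pi := map_mx (@polyC F) (invmx P).
have PiPp : Pi *m Pp = 1%:M by rewrite -map_mxM mulVmx // map_mx1.
rewrite /char_poly.
have -> : char_poly_mx (invmx P *m X *m P) = Pi *m char_poly_mx X *m Pp.
  rewrite /char_poly_mx !map_mxM mulmxBr mulmxBl -/Pp -/Pi.
  by rewrite mul_mx_scalar -scalemxAl PiPp -scalemx1 scale1r scalemx1.
rewrite !det_mulmx mulrC mulrA -det_mulmx.
by rewrite [Pp *m Pi]mulmx1C ?PiPp // det1 mul1r.
Qed.

Lemma invmx_add_eigen_outer (F : fieldType) n (Y : 'M[F]_n) (w : 'cV[F]_n) (r v : F) :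
  Y \in unitmx -> Y *m w = r *: w -> w^T *m Y = r *: w^T -> w^T *m w = v%:M ->
  r != 0 -> v != 0 -> 1 + r != 0 ->
  invmx (Y + v^-1 *: (w *m w^T)) = invmx Y - (v * r * (1 + r))^-1 *: (w *m w^T).
Proof.
move=> Yu Yw wY wTw r0 v0 r1; set c := (v * r * (1 + r))^-1.
have wYi : w^T *m invmx Y = r^-1 *: w^T.
  have E : w^T = r^-1 *: (w^T *m Y) by rewrite wY scalerA mulVf ?scale1r.
  by rewrite {1}E -scalemxAl mulmxK.
set W := w *m w^T.
have YW : Y *m W = r *: W by rewrite /W mulmxA Yw -scalemxAl.
have WYi : W *m invmx Y = r^-1 *: W by rewrite /W -mulmxA wYi -scalemxAr.
have WW : W *m W = v *: W by rewrite /W mulmxA -(mulmxA w) wTw mul_mx_scalar -scalemxAl.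
clearbody W.
have MMi : (Y + v^-1 *: W) *m (invmx Y - c *: W) = 1%:M.
  rewrite mulmxDl !mulmxBr mulmxV // -!scalemxAr -!scalemxAl YW WYi WW !scalerA.
  have E : v^-1 / r - c / v * v = c * r by rewrite /c; field; rewrite v0 r0 r1.
  by rewrite -scalerBl E subrK.
have Mu : Y + v^-1 *: W \in unitmx by have [] := mulmx1_unit MMi.
by rewrite -[invmx _]mulmx1 -MMi mulKmx.
Qed.

Section SymmetricSpectrum.
Variables (R : rcfType) (n : nat) (N : 'M[R]_n).
Hypothesis Nsym : N^T = N.
Local Notation toC := (real_complex R).
Let NC := map_mx toC N.
Let U := spectralmx NC.

Definition sym_eig (k : 'I_n) : R := complex.Re (spectral_diag NC 0 k).

Lemma map_sym_hermsymmx : NC \is hermsymmx.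
Proof.
apply/is_hermitianmxP; rewrite expr0 scale1r; apply/matrixP => k l.
rewrite !mxE conj_Creal; last by apply/complex_realP; exists (N l k).
by rewrite -{1}Nsym mxE.
Qed.

Lemma map_sym_spectral :
  NC = invmx U *m diag_mx (\row_k toC (sym_eig k)) *m U.
Proof.
rewrite {1}(orthomx_spectralP (hermitian_normalmx map_sym_hermsymmx)).
congr (_ *m diag_mx _ *m _); apply/rowP => k; rewrite mxE.
have /mxOverP := hermitian_spectral_diag_real map_sym_hermsymmx.
by move=> /(_ 0 k) /RRe_real.
Qed.

Lemma map_shift_sym (s : R) :
  map_mx toC (s%:M - N) = invmx U *m diag_mx (\row_k toC (s - sym_eig k)) *m U.
Proof.
rewrite map_mxB map_scalar_mx -/NC map_sym_spectral.
have -> : (toC s)%:M = invmx U *m (toC s)%:M *m U :> 'M[R[i]]_n.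
  by rewrite mul_mx_scalar -scalemxAl mulVmx ?spectral_unit // scalemx1.
rewrite -mulmxBl -mulmxBr.
by congr (_ *m _ *m _); apply/matrixP => k l; rewrite !mxE -mulrnBl rmorphB.
Qed.

Lemma char_poly_map_sym : char_poly NC = \prod_(k < n) ('X - (toC (sym_eig k))%:P).
Proof.
rewrite map_sym_spectral char_poly_conj ?spectral_unit //.
by rewrite char_poly_trig ?diag_mx_is_trig //; apply: eq_bigr => k _; rewrite !mxE eqxx.
Qed.

Lemma shift_sym_unit_trace (s : R) : (forall k, sym_eig k != s) ->
  s%:M - N \in unitmx /\ \tr (invmx (s%:M - N)) = \sum_k (s - sym_eig k)^-1.
Proof.
move=> hs; pose W := invmx U *m diag_mx (\row_k toC ((s - sym_eig k)^-1)) *m U.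
have YW : map_mx toC (s%:M - N) *m W = 1%:M.
  rewrite map_shift_sym /W !mulmxA mulmxK ?spectral_unit // -(mulmxA (invmx U)) mulmx_diag.
  rewrite [X in diag_mx X](_ : _ = const_mx 1); last first.
    by apply/rowP => k; rewrite !mxE -rmorphM mulfV ?rmorph1 // subr_eq0 eq_sym.
  by rewrite diag_const_mx mul_mx_scalar scale1r mulVmx ?spectral_unit.
have Yu : map_mx toC (s%:M - N) \in unitmx by have [] := mulmx1_unit YW.
split; first by rewrite map_unitmx in Yu.
have iY : invmx (map_mx toC (s%:M - N)) = W by rewrite -[LHS]mulmx1 -YW mulKmx.
apply: (@complexI R); rewrite -trace_map_mx map_invmx iY /W.
rewrite mxtrace_mulC mulKVmx ?spectral_unit //.
by rewrite mxtrace_diag rmorph_sum; apply: eq_bigr => k _; rewrite mxE.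
Qed.

Lemma mxrank_1B_sym : \rank (1%:M - N) = (\sum_k ((sym_eig k != 1)%R : nat))%N.
Proof.
rewrite -(mxrank_map toC) map_shift_sym mxrankMfree ?row_free_unit ?spectral_unit //.
rewrite eqmxMfull ?row_full_unit ?unitmx_inv ?spectral_unit // mxrank_diag.
by apply: eq_bigr => k _; rewrite mxE fmorph_eq0 subr_eq0 eq_sym.
Qed.

Lemma mxrank_ker_1B_sym : \rank (kermx (1%:M - N)) = #|[pred k | sym_eig k == 1]|.
Proof.
rewrite mxrank_ker mxrank_1B_sym.
have -> : (\sum_k ((sym_eig k != 1)%R : nat))%N = #|[predC [pred k | sym_eig k == 1]]|.
  by rewrite -sum1_card [RHS]big_mkcond; apply: eq_bigr => k _; rewrite !inE; case: eqP.
by rewrite -{1}(card_ord n) -(cardC [pred k | sym_eig k == 1]) addnK.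
Qed.

End SymmetricSpectrum.

Lemma connect_eq_fun (T : finType) (e : rel T) (U : eqType) (f : T -> U) :
  (forall x y, e x y -> f x = f y) -> forall x y, connect e x y -> f x = f y.
Proof.
move=> hf x y; have cl : closed_mem e (mem [pred z | f z == f x]).
  by move=> a b /hf; rewrite !inE => ->.
by move/(closed_connect cl); rewrite !inE eqxx => /esym/eqP.
Qed.

Lemma near_eq_cvg_to {T} {U : nbhsType} (F : set_system T) {FF : Filter F}
    (f g : T -> U) (l : U) :
  (\forall x \near F, f x = g x) -> g @ F --> l -> f @ F --> l.
Proof. by move=> e; apply: cvg_trans; apply: near_eq_cvg; apply: filterS e. Qed.

Lemma near0_addr_neq (R : realType) (x c : R) : \forall r \near 0^'+, x != c + r.
Proof.
have [xc|xc] := leP x c.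
  by apply: filterS (nbhs_right_gt 0) => r r0; rewrite lt_eqF //; lra.
have h : 0 < x - c by lra.
by apply: filterS (nbhs_right_lt h) => r hr; rewrite gt_eqF //; lra.
Qed.

Lemma cvg_sum_inv_shift (R : realType) (I : Type) (s : seq I) (P : pred I) (g : I -> R) :
  (forall x, P x -> g x != 1) ->
  (\sum_(x <- s | P x) (1 + r - g x)^-1) @[r --> 0^'+] --> \sum_(x <- s | P x) (1 - g x)^-1.
Proof.
move=> hg; elim: s => [|x t IH].
  by rewrite big_nil; under eq_fun do rewrite big_nil; exact: cvg_cst.
rewrite big_cons; under eq_fun do rewrite big_cons.
have [Px|//] := boolP (P x); apply: cvgD => //.
have gx : 1 - g x != 0 by rewrite subr_eq0 eq_sym hg.
apply: (cvgV gx); apply: cvg_at_right_filter.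
rewrite -[X in _ --> X - _]addr0; apply: cvgB; last exact: cvg_cst.
by apply: cvgD; [exact: cvg_cst | exact: cvg_id].
Qed.

Section NormalizedAdjacency.
Variables (R : realType) (n : nat) (A B : 'M[R]_n).
Hypothesis dpos : forall k, 0 < deg A k.
Hypotheses (Bsym : B^T = B) (Bdeg : forall k, \sum_l B k l = deg A k).
Hypothesis Bnn : forall k l, 0 <= B k l.

Local Notation Sd := (Dinvsqrt A).
Local Notation Td := (Dsqrt A).
Local Notation w := (Dsqrt A *m ones R n).

Lemma vol_gt0 (k : 'I_n) : 0 < vol A.
Proof.
rewrite /vol (bigD1 k) //=; apply: lt_le_trans (dpos k) _.
by rewrite lerDl sumr_ge0 // => l _; exact: ltW.
Qed.

Lemma sqrt_deg_neq0 k : Num.sqrt (deg A k) != 0.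
Proof. by rewrite gt_eqF // sqrtr_gt0 dpos. Qed.

Lemma Dsqrt_Dinvsqrt : Td *m Sd = 1%:M.
Proof.
rewrite mulmx_diag -diag_const_mx; congr diag_mx.
by apply/rowP => k; rewrite !mxE mulfV ?sqrt_deg_neq0.
Qed.

Lemma Dinvsqrt_Dsqrt : Sd *m Td = 1%:M.
Proof.
rewrite mulmx_diag -diag_const_mx; congr diag_mx.
by apply/rowP => k; rewrite !mxE mulVf ?sqrt_deg_neq0.
Qed.

Lemma Dinvsqrt_Dmat : Sd *m Dmat A = Td.
Proof.
rewrite mulmx_diag; congr diag_mx; apply/rowP => k; rewrite !mxE.
rewrite -{2}(@sqr_sqrtr _ (deg A k)) ?ltW ?dpos // expr2 mulrA mulVf ?mul1r //.
exact: sqrt_deg_neq0.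
Qed.

Lemma Dmat_Dinvsqrt : Dmat A *m Sd = Td.
Proof. by rewrite /Dmat /Dinvsqrt diag_mxC -/(Dmat A) Dinvsqrt_Dmat. Qed.

Lemma invmx_Dmat : invmx (Dmat A) = Sd *m Sd.
Proof.
have E : Sd *m Sd *m Dmat A = 1%:M by rewrite -mulmxA Dinvsqrt_Dmat Dinvsqrt_Dsqrt.
have [_ Du] := mulmx1_unit E.
by rewrite -[invmx _]mul1mx -E -(mulmxA (Sd *m Sd)) mulmxV // mulmx1.
Qed.

Lemma invmx_Dsqrt : invmx Td = Sd.
Proof.
have [Tu _] := mulmx1_unit Dsqrt_Dinvsqrt.
by rewrite -[invmx _]mul1mx -Dinvsqrt_Dsqrt -(mulmxA Sd) mulmxV // mulmx1.
Qed.

Lemma Dsqrt_ones_entry k a : w k a = Num.sqrt (deg A k).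
Proof.
rewrite !mxE (bigD1 k) //= big1 ?addr0; last first.
  by move=> l /negbTE lk; rewrite !mxE eq_sym lk mulr0n mul0r.
by rewrite !mxE eqxx mulr1n mulr1.
Qed.

Lemma Dsqrt_ones_norm : w^T *m w = (vol A)%:M.
Proof.
apply/matrixP => a b; rewrite !ord1 [LHS]mxE [RHS]mxE /vol mulr1n.
apply: eq_bigr => k _.
by rewrite [w^T _ _]mxE !Dsqrt_ones_entry -expr2 sqr_sqrtr // ltW.
Qed.

Lemma Dsqrt_ones_neq0 (k : 'I_n) : w^T != 0.
Proof.
apply/eqP => /matrixP /(_ 0 k); rewrite [_^T _ _]mxE Dsqrt_ones_entry mxE.
by move/eqP; rewrite (negbTE (sqrt_deg_neq0 k)).
Qed.

Definition nadj := Sd *m B *m Sd.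

Lemma nadj_sym : nadj^T = nadj.
Proof. by rewrite /nadj !trmx_mul !tr_diag_mx Bsym mulmxA. Qed.

Lemma nadj_Dsqrt_ones : nadj *m w = w.
Proof.
have Bones : B *m ones R n = Dmat A *m ones R n.
  apply/matrixP => k a; rewrite [RHS]mxE (bigD1 k) //= big1 ?addr0; last first.
    by move=> l /negbTE lk; rewrite !mxE eq_sym lk mulr0n mul0r.
  by rewrite !mxE eqxx mulr1n mulr1 -Bdeg; apply: eq_bigr => l _; rewrite !mxE mulr1.
rewrite /nadj -!mulmxA (mulmxA Sd Td) Dinvsqrt_Dsqrt mul1mx Bones.
by rewrite mulmxA Dinvsqrt_Dmat.
Qed.

Lemma Dsqrt_ones_nadj : w^T *m nadj = w^T.
Proof. by rewrite -[nadj]nadj_sym -trmx_mul nadj_Dsqrt_ones. Qed.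

Lemma Kreg_trace r : 0 < vol A -> 0 < r -> (1 + r)%:M - nadj \in unitmx ->
  Kreg A r B = \tr (invmx ((1 + r)%:M - nadj)) - r^-1.
Proof.
move=> vol_pos r_gt0 Yu; rewrite /Kreg; set Y := _ - nadj.
have r_neq0 : r != 0 by rewrite gt_eqF.
have r1_neq0 : 1 + r != 0 by rewrite gt_eqF // ltr_wpDr // ltW.
have vol_neq0 : vol A != 0 by rewrite gt_eqF.
have Yw : Y *m w = r *: w.
  by rewrite mulmxBl nadj_Dsqrt_ones mul_scalar_mx scalerDl scale1r addrAC subrr add0r.
have wY : w^T *m Y = r *: w^T.
  by rewrite mulmxBr Dsqrt_ones_nadj mul_mx_scalar scalerDl scale1r addrAC subrr add0r.
have -> : Td *m ones R n *m (ones R n)^T *m Td = w *m w^T.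
  by rewrite trmx_mul tr_diag_mx mulmxA.
rewrite -/nadj -/Y (invmx_add_eigen_outer Yu Yw wY Dsqrt_ones_norm) //.
rewrite raddfB /= mxtraceZ mxtrace_mulC Dsqrt_ones_norm mxtrace_scalar.
by field; rewrite vol_neq0 r_neq0 r1_neq0.
Qed.

Local Notation lam := (sym_eig nadj).

Lemma Kreg_eig_near : 0 < vol A ->
  \forall r \near 0^'+, Kreg A r B = \sum_k (1 + r - lam k)^-1 - r^-1.
Proof.
move=> vol_pos; near=> r.
have r_gt0 : 0 < r by near: r; exact: nbhs_right_gt.
have hs : forall k, lam k != 1 + r.
  by near: r; apply: filter_forall => k; exact: near0_addr_neq.
have [Yu trY] := shift_sym_unit_trace nadj_sym hs.
by rewrite Kreg_trace // trY.
Unshelve. all: by end_near.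
Qed.

(* The junk value [(1 - 1)^-1 = 0] makes the [rem 1] in [Kemeny] immaterial. *)
Lemma Kemeny_eig : Kemeny (invmx (Dmat A) *m B) = \sum_k (1 - lam k)^-1.
Proof.
set t := [seq real_complex R (lam k) | k <- index_enum 'I_n].
have conj : invmx (Dmat A) *m B = invmx Td *m nadj *m Td.
  by rewrite invmx_Dmat invmx_Dsqrt /nadj -!mulmxA Dinvsqrt_Dsqrt mulmx1 !mulmxA.
have cpQ : char_poly (map_mx (real_complex R) (invmx (Dmat A) *m B))
    = \prod_(z <- t) ('X - z%:P).
  rewrite conj [map_mx _ (_ *m Td)]map_mxM [map_mx _ (_ *m nadj)]map_mxM.
  rewrite map_invmx char_poly_conj; last first.
    by rewrite map_unitmx; have [] := mulmx1_unit Dsqrt_Dinvsqrt.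
  by rewrite char_poly_map_sym ?nadj_sym // big_map.
rewrite /Kemeny /eigs; case: closed_field_poly_normal => s /= Hs.
have /prod_XsubC_eq pst : \prod_(z <- s) ('X - z%:P) = \prod_(z <- t) ('X - z%:P).
  by rewrite -cpQ [RHS]Hs (monicP (char_poly_monic _)) scale1r.
have -> : \sum_(z <- rem 1 s) (1 - z)^-1 = \sum_(z <- s) (1 - z)^-1.
  have [s1|s1] := boolP (1 \in s); last by rewrite rem_id.
  by rewrite [RHS](perm_big _ (perm_to_rem s1)) big_cons /= subrr invr0 add0r.
rewrite (perm_big _ pst) big_map raddf_sum; apply: eq_bigr => k _.
by rewrite -(@rmorph1 _ _ (real_complex R)) -rmorphB -fmorphV.
Qed.

Definition Kreg_rest r := \sum_(k | lam k != 1) (1 + r - lam k)^-1.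

Lemma Kreg_rest_cvg : Kreg_rest r @[r --> 0^'+] --> Kemeny (invmx (Dmat A) *m B).
Proof.
rewrite Kemeny_eig (bigID (fun k => lam k == 1)) /= big1 ?add0r.
  exact: cvg_sum_inv_shift.
by move=> k /eqP ->; rewrite subrr invr0.
Qed.

Lemma Kreg_expansion : 0 < vol A -> \forall r \near 0^'+,
  Kreg A r B = ((\rank (kermx (1%:M - nadj)))%:R - 1) / r + Kreg_rest r.
Proof.
move=> vol_pos; apply: filterS2 (Kreg_eig_near vol_pos) (nbhs_right_gt 0) => r -> r0.
rewrite (mxrank_ker_1B_sym nadj_sym) (bigID (fun k => lam k == 1)) /= -/(Kreg_rest r).
rewrite (eq_bigr (fun _ => r^-1)); last by move=> k /eqP ->; congr (_^-1); ring.
by rewrite sumr_const -mulr_natl; ring.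
Qed.

Lemma nadj_ker_form (x : 'rV[R]_n) :
  x *m (1%:M - nadj) = (x *m Sd) *m (Dmat A - B) *m Sd.
Proof.
rewrite /nadj !mulmxBr mulmxBl; congr (_ - _); last by rewrite !mulmxA.
by rewrite -!mulmxA Dmat_Dinvsqrt Dinvsqrt_Dsqrt.
Qed.

Lemma laplacian_entry (y : 'rV[R]_n) l :
  (y *m (Dmat A - B)) 0 l = \sum_k B k l * (y 0 l - y 0 k).
Proof.
rewrite mulmxBr /Dmat mul_mx_diag !mxE.
rewrite [RHS](eq_bigr (fun k => B k l * y 0 l - y 0 k * B k l)); last first.
  by move=> k _; rewrite mulrBr [B k l * y 0 k]mulrC.
rewrite sumrB -mulr_suml -Bdeg mulrC; congr (_ * _ - _).
by apply: eq_bigr => k _; rewrite -{1}Bsym mxE.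
Qed.

(* The quadratic form [y (D - B) y^T] is the sum of [B k l (y k - y l)^2 / 2]. *)
Lemma laplacian_ker_const (y : 'rV[R]_n) : y *m (Dmat A - B) = 0 ->
  forall k l, 0 < B k l -> y 0 k = y 0 l.
Proof.
move=> hy.
have z l : \sum_k B k l * (y 0 l - y 0 k) = 0 by rewrite -laplacian_entry hy mxE.
have z' k : \sum_l B k l * (y 0 k - y 0 l) = 0.
  by rewrite -[RHS](z k); apply: eq_bigr => l _; rewrite -{1}Bsym mxE.
have split_sq k l : B k l * (y 0 k - y 0 l)^+2 =
    y 0 k * (B k l * (y 0 k - y 0 l)) + y 0 l * (B k l * (y 0 l - y 0 k)).
  by ring.
have form0 : \sum_k \sum_l B k l * (y 0 k - y 0 l)^+2 = 0.
  under eq_bigr do under eq_bigr do rewrite split_sq.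
  under eq_bigr do rewrite big_split /=.
  rewrite big_split /= [X in X + _]big1 => [|k _]; last by rewrite -mulr_sumr z' mulr0.
  by rewrite exchange_big big1 ?addr0 // => l _; rewrite -mulr_sumr z mulr0.
have nn k l : 0 <= B k l * (y 0 k - y 0 l)^+2 by rewrite mulr_ge0 ?sqr_ge0.
move=> k l Bkl.
have /(_ k isT) := psumr_eq0P (fun k _ => sumr_ge0 _ (fun l _ => nn k l)) form0.
move=> /(psumr_eq0P (fun l _ => nn k l)) /(_ l isT) /eqP.
by rewrite mulf_eq0 gt_eqF //= sqrf_eq0 subr_eq0 => /eqP.
Qed.

Lemma ker_1B_nadj_const (x : 'rV[R]_n) : (x <= kermx (1%:M - nadj))%MS ->
  forall k l, 0 < B k l -> (x *m Sd) 0 k = (x *m Sd) 0 l.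
Proof.
move/sub_kermxP => hx; apply: laplacian_ker_const.
have h : (x *m Sd) *m (Dmat A - B) *m Sd = 0 by rewrite -nadj_ker_form.
by rewrite -[LHS]mulmx1 -Dinvsqrt_Dsqrt mulmxA h mul0mx.
Qed.

Lemma ker_1B_nadj_indicator (S : pred 'I_n) :
  (forall k l, 0 < B k l -> S k = S l) ->
  ((\row_k (S k)%:R) *m Td <= kermx (1%:M - nadj))%MS.
Proof.
move=> hS; apply/sub_kermxP.
rewrite nadj_ker_form -(mulmxA (\row_k _)) Dsqrt_Dinvsqrt mulmx1.
suff -> : \row_k (S k)%:R *m (Dmat A - B) = 0 by rewrite mul0mx.
apply/rowP => l; rewrite laplacian_entry [RHS]mxE big1 // => k _.
have [Bp|Bn] := ltP 0 (B k l); first by rewrite !mxE (hS _ _ Bp) subrr mulr0.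
by rewrite (_ : B k l = 0) ?mul0r //; apply/eqP; rewrite eq_le Bn Bnn.
Qed.

Lemma Dsqrt_ones_ker : (w^T <= kermx (1%:M - nadj))%MS.
Proof.
by apply/sub_kermxP; rewrite mulmxBr mulmx1 Dsqrt_ones_nadj subrr.
Qed.

Lemma ker_1B_nadj_span (G : 'M[R]_n) (x : 'rV[R]_n) :
  (forall k l, 0 < G k l -> 0 < B k l) -> (x <= kermx (1%:M - nadj))%MS ->
  forall k l, connect (adjrel G) k l -> (x *m Sd) 0 l = (x *m Sd) 0 k.
Proof.
move=> GB hx k l /(connect_eq_fun (f := fun k => (x *m Sd) 0 k)) -> //.
by move=> a b /GB; exact: ker_1B_nadj_const.
Qed.

Lemma row_Dsqrt_entry (y : 'rV[R]_n) k : (y *m Td) 0 k = y 0 k * Num.sqrt (deg A k).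
Proof. by rewrite mul_mx_diag !mxE. Qed.

Lemma row_Dinvsqrt_Dsqrt (x : 'rV[R]_n) k : x 0 k = (x *m Sd) 0 k * Num.sqrt (deg A k).
Proof. by rewrite -row_Dsqrt_entry -mulmxA Dinvsqrt_Dsqrt mulmx1. Qed.

Lemma mxrank_ker_1B_nadj_connected (G : 'M[R]_n) (k0 : 'I_n) :
  (forall k l, connect (adjrel G) k l) -> (forall k l, 0 < G k l -> 0 < B k l) ->
  \rank (kermx (1%:M - nadj)) = 1%N.
Proof.
move=> conn GB; apply/eqP; rewrite eqn_leq; apply/andP; split; last first.
  by rewrite (leq_trans _ (mxrankS Dsqrt_ones_ker)) // rank_rV Dsqrt_ones_neq0.
have sub : (kermx (1%:M - nadj) <= w^T)%MS.
  apply/row_subP => a; set x := row a _; apply/sub_rVP.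
  exists ((x *m Sd) 0 k0); apply/rowP => k.
  rewrite [in RHS]mxE [w^T _ _]mxE Dsqrt_ones_entry row_Dinvsqrt_Dsqrt.
  by rewrite (ker_1B_nadj_span GB (row_sub a _) (conn k0 k)).
by rewrite (leq_trans (mxrankS sub)) // rank_leq_row.
Qed.

Lemma ker_1B_nadj_sub_components (G : 'M[R]_n) (i j : 'I_n) :
  let C := connect (adjrel G) i in
  (forall k, C k \/ connect (adjrel G) j k) -> (forall k l, 0 < G k l -> 0 < B k l) ->
  (kermx (1%:M - nadj) <= col_mx (\row_k (C k)%:R *m Td) (\row_k (~~ C k)%:R *m Td))%MS.
Proof.
move=> C cover GB; apply/row_subP => a; set x := row a _; set y := x *m Sd.
have cst k l : connect (adjrel G) k l -> y 0 l = y 0 k.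
  exact: ker_1B_nadj_span GB (row_sub a _) k l.
have xy : x = y *m Td by rewrite /y -mulmxA Dinvsqrt_Dsqrt mulmx1.
clearbody y; apply/submxP; exists (row_mx (y 0 i)%:M (y 0 j)%:M).
rewrite mul_row_col !mul_scalar_mx (scalemxAl (y 0 i)) (scalemxAl (y 0 j)).
rewrite -mulmxDl xy; congr (_ *m _); apply/rowP => k; rewrite !mxE.
have [Ck|nCk] := boolP (C k); first by rewrite mulr1 mulr0 addr0; exact: cst Ck.
have jk : connect (adjrel G) j k by case: (cover k) => // Ck; rewrite Ck in nCk.
by rewrite mulr0 mulr1 add0r; exact: cst jk.
Qed.

Lemma mxrank_ker_1B_nadj_two_components (G : 'M[R]_n) (i j k0 : 'I_n) :
  let C := connect (adjrel G) i in
  (forall k, C k \/ connect (adjrel G) j k) -> ~~ C k0 ->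
  (forall k l, 0 < G k l -> 0 < B k l) -> (forall k l, 0 < B k l -> C k = C l) ->
  \rank (kermx (1%:M - nadj)) = 2%N.
Proof.
move=> C cover Ck0 GB closC; apply/eqP; rewrite eqn_leq; apply/andP; split.
  by rewrite (leq_trans (mxrankS (ker_1B_nadj_sub_components cover GB))) // rank_leq_row.
rewrite ltnNge; apply/negP => le1.
have rw : \rank w^T = 1%N by rewrite rank_rV (Dsqrt_ones_neq0 k0).
have kw : (kermx (1%:M - nadj) <= w^T)%MS.
  have [h1 h2] := mxrank_leqif_sup Dsqrt_ones_ker.
  by rewrite -h2 rw eqn_leq le1 -rw h1.
have /sub_rVP [c hc] := submx_trans (ker_1B_nadj_indicator closC) kw.
have /rowP hC : \row_k (C k)%:R = c *: (ones R n)^T.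
  rewrite -[LHS]mulmx1 -Dsqrt_Dinvsqrt mulmxA hc trmx_mul tr_diag_mx.
  by rewrite -scalemxAl -mulmxA Dsqrt_Dinvsqrt mulmx1.
have Ci : C i := connect0 _ i.
move: (hC i) (hC k0); rewrite !mxE Ci (negbTE Ck0) mulr1 => <- /eqP.
by rewrite eq_sym oner_eq0.
Qed.

End NormalizedAdjacency.

Section EdgeDeletion.
Variables (R : realType) (n : nat) (A : 'M[R]_n) (i j : 'I_n).
Hypotheses (Asym : A^T = A) (Ann : forall k l, 0 <= A k l) (ij : i != j).

Local Notation Ah := (Ahat A i j).
Local Notation del := (delete_edge A i j).

Lemma Ahat_entry k l :
  Ah k l = A k l + A i j * (((k == i)%:R - (k == j)%:R) * ((l == i)%:R - (l == j)%:R)).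
Proof. by rewrite !mxE big_ord1 !mxE /= !andbT. Qed.

Lemma Ahat_offdiag k l : k != l -> Ah k l = del k l.
Proof.
have Aji : A j i = A i j by rewrite -{1}Asym mxE.
have ji : (j == i) = false by rewrite eq_sym (negbTE ij).
move=> kl; rewrite Ahat_entry mxE.
have [ki|ki] := eqVneq k i.
  subst k; have li : (l == i) = false by apply/negbTE; rewrite eq_sym.
  rewrite (negbTE ij) li /=.
  by have [->|lj] := eqVneq l j; rewrite /= ?ji; ring.
have [kj|kj] := eqVneq k j.
  subst k; have lj : (l == j) = false by apply/negbTE; rewrite eq_sym.
  rewrite ?ji lj /=.
  by have [->|li] := eqVneq l i; rewrite /= ?(negbTE ij) ?Aji; ring.
by rewrite /=; ring.
Qed.

Lemma Ahat_diag_ge k : A k k <= Ah k k.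
Proof. by rewrite Ahat_entry lerDl mulr_ge0 // -expr2 sqr_ge0. Qed.

Lemma Ahat_sym : Ah^T = Ah.
Proof.
apply/matrixP => k l; rewrite mxE !Ahat_entry -{1}Asym mxE.
by congr (_ + _ * _); rewrite mulrC.
Qed.

Lemma Ahat_deg k : \sum_l Ah k l = deg A k.
Proof.
under eq_bigr do rewrite Ahat_entry.
rewrite big_split /= -!mulr_sumr sumrB.
have s1 (c : 'I_n) : \sum_(l < n) ((l == c)%:R : R) = 1.
  by rewrite (bigD1 c) //= eqxx big1 ?addr0 // => l /negbTE ->.
by rewrite !s1 subrr !mulr0 addr0.
Qed.

Lemma Ahat_ge0 k l : 0 <= Ah k l.
Proof.
have [->|kl] := eqVneq k l; first exact: le_trans (Ann l l) (Ahat_diag_ge l).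
by rewrite Ahat_offdiag // mxE; case: ifP.
Qed.

Lemma Ahat_gt0_delete k l : 0 < del k l -> 0 < Ah k l.
Proof.
have [<-|kl] := eqVneq k l; last by rewrite Ahat_offdiag.
rewrite mxE; case: ifP => _; first by rewrite ltxx.
by move/lt_le_trans; apply; exact: Ahat_diag_ge.
Qed.

Lemma delete_edge_sym : symmetric (adjrel del).
Proof.
move=> k l; rewrite /adjrel !mxE -{1}Asym mxE.
by rewrite orbC (andbC (l == j)) (andbC (l == i)).
Qed.

Lemma connect_delete_Ahat k l : 0 < Ah k l ->
  connect (adjrel del) i k = connect (adjrel del) i l.
Proof.
have [->|kl] := eqVneq k l; first by [].
rewrite Ahat_offdiag // => kl_del.
have e : connect (adjrel del) k l by apply: connect1.
apply/idP/idP => hc.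
  exact: connect_trans hc e.
by apply: connect_trans hc _; rewrite (sym_connect_sym delete_edge_sym).
Qed.

Lemma connect_delete_cover : connectedG A ->
  forall k, connect (adjrel del) i k \/ connect (adjrel del) j k.
Proof.
move=> conn k; have /connectP [p pp ->] := conn i k.
pose P x := connect (adjrel del) i x \/ connect (adjrel del) j x.
suff reach a : P a -> path (adjrel A) a p -> P (last a p).
  by apply: reach pp; left; exact: connect0.
elim: p a {pp} => [|b q IH] a //= ha /andP [ab pb]; apply: IH pb.
have [->|bi] := eqVneq b i; first by left.
have [->|bj] := eqVneq b j; first by right.
have e : adjrel del a b by rewrite /adjrel mxE (negbTE bi) (negbTE bj) !andbF.
by case: ha => h; [left|right]; exact: connect_trans h (connect1 e).
Qed.

Lemma cut_edge_unreachable : cut_edge A i j -> exists k, ~~ connect (adjrel del) i k.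
Proof.
move=> cut; apply: contrapT => noex; apply: cut => k l.
have all_i k' : connect (adjrel del) i k' by apply/negPn/negP => h; apply: noex; exists k'.
by apply: connect_trans (all_i l); rewrite (sym_connect_sym delete_edge_sym).
Qed.

End EdgeDeletion.

Section EdgeScore.
Variables (R : realType) (n : nat) (A : 'M[R]_n) (i j : 'I_n).
Hypotheses (Asym : A^T = A) (Ann : forall k l, 0 <= A k l).
Hypotheses (dpos : forall k, 0 < deg A k) (Aconn : connectedG A) (ij : i != j).

Local Notation Ah := (Ahat A i j).
Let A_deg : forall k, \sum_l A k l = deg A k := fun k => erefl.
Let Ah_sym := Ahat_sym i j Asym.
Let Ah_deg := Ahat_deg A i j.
Let Ah_ge0 := Ahat_ge0 Asym Ann ij.
Let Ah_gt0 := Ahat_gt0_delete Asym Ann ij.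
Let rest_cvg := cvgB (Kreg_rest_cvg dpos Ah_sym) (Kreg_rest_cvg dpos Asym).

Lemma c_reg_expansion : \forall r \near 0^'+,
  c_reg A i j r = ((\rank (kermx (1%:M - nadj A Ah)))%:R - 1) / r
                  + (Kreg_rest A Ah r - Kreg_rest A A r).
Proof.
have mA : \rank (kermx (1%:M - nadj A A)) = 1%N.
  exact: (mxrank_ker_1B_nadj_connected (G := A) dpos Asym A_deg Ann i Aconn (fun k l h => h)).
have := Kreg_expansion dpos Asym A_deg (vol_gt0 dpos i).
have := Kreg_expansion dpos Ah_sym Ah_deg (vol_gt0 dpos i).
apply: filterS2 => r eH eA.
by rewrite /c_reg eH eA mA; ring.
Qed.

Lemma c_reg_cvg_noncut : ~ cut_edge A i j -> c_reg A i j r @[r --> 0^'+] --> c_score A i j.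
Proof.
move=> /contrapT conn_del.
have mH : \rank (kermx (1%:M - nadj A Ah)) = 1%N.
  exact: (mxrank_ker_1B_nadj_connected (G := delete_edge A i j)
    dpos Ah_sym Ah_deg Ah_ge0 i conn_del Ah_gt0).
apply: near_eq_cvg_to c_reg_expansion _; rewrite mH subrr.
by under eq_fun do rewrite mul0r add0r.
Qed.

Lemma c_reg_cvg_cut : cut_edge A i j ->
  (r * c_reg A i j r) @[r --> 0^'+] --> (1 : R) /\
  (r^-1 - c_reg A i j r) @[r --> 0^'+] --> - c_score A i j.
Proof.
move=> /(cut_edge_unreachable Asym) [k0 k0n].
have mH : \rank (kermx (1%:M - nadj A Ah)) = 2%N.
  exact: (mxrank_ker_1B_nadj_two_components (G := delete_edge A i j)
    dpos Ah_sym Ah_deg Ah_ge0 (connect_delete_cover i j Aconn) k0n Ah_gt0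
    (connect_delete_Ahat Asym ij)).
have expansion : \forall r \near 0^'+,
    c_reg A i j r = r^-1 + (Kreg_rest A Ah r - Kreg_rest A A r).
  apply: filterS c_reg_expansion => r ->; rewrite mH; congr (_ + _).
  by rewrite -mulr_natl; ring.
split.
  apply: (@near_eq_cvg_to _ _ _ _ _ (fun r => 1 + r * (Kreg_rest A Ah r - Kreg_rest A A r))).
    apply: filterS2 expansion (nbhs_right_gt 0) => r -> r0.
    by rewrite mulrDr mulfV ?gt_eqF.
  rewrite -[X in _ --> X]addr0 -[X in _ --> _ + X](mul0r (c_score A i j)).
  apply: cvgD; first exact: cvg_cst.
  by apply: cvgM; [exact: (cvg_at_right_filter (f := id) cvg_id) | exact: rest_cvg].
apply: near_eq_cvg_to (filterS _ expansion) (cvgN rest_cvg) => r ->.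
by rewrite opprD addrA subrr add0r.
Qed.

End EdgeScore.

Unset Implicit Arguments.

Theorem mainTheorem10 (R : realType) (n : nat) (A : 'M[R]_n) (i j : 'I_n) :
  A^T = A ->
  (forall k l, 0 <= A k l) ->
  (forall k, 0 < deg A k) ->
  connectedG A ->
  i != j ->
  0 < A i j ->
  (* (a) *)
  (~ cut_edge A i j ->
     c_reg A i j r @[r --> 0^'+] --> c_score A i j) /\
  (* (b) *)
  (cut_edge A i j ->
     (r * c_reg A i j r) @[r --> 0^'+] --> (1 : R) /\
     exists L : R, (r^-1 - c_reg A i j r) @[r --> 0^'+] --> L) /\
  (* consequence for the filtered score *)
  (exists L : R, c_filtered A i j r @[r --> 0^'+] --> L) /\
  (~ cut_edge A i j ->
     c_filtered A i j r @[r --> 0^'+] --> c_score A i j).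
Proof.
move=> Asym Ann dpos conn ij _.
have noncut := c_reg_cvg_noncut Asym Ann dpos conn ij.
have cut := c_reg_cvg_cut Asym Ann dpos conn ij.
have filtered_noncut : ~ cut_edge A i j -> c_filtered A i j r @[r --> 0^'+] --> c_score A i j.
  by move=> nc; rewrite /c_filtered asboolF //; exact: noncut.
have filtered_cut : cut_edge A i j -> c_filtered A i j r @[r --> 0^'+] --> - c_score A i j.
  by move=> ct; rewrite /c_filtered asboolT //; exact: (cut ct).2.
split=> //; split; first by move=> /cut [? ?]; split=> //; exists (- c_score A i j).
split=> //; have [ct|nc] := pselect (cut_edge A i j).
  by exists (- c_score A i j); exact: filtered_cut.
by exists (c_score A i j); exact: filtered_noncut.
Qed.
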